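(* Let $\mathcal A$ be an $n$-DPDA whose input alphabet contains the letter $\star$. Let $R$ be a (finite) run of $\mathcal A$ such that both $R(0)$ and $R(|R|)$ are milestone configurations and $R$ reads only stars (a word in $\star^*$). Then $R$ is $0$-upper.
   Context: Stacks: fix order $n\ge1$, finite stack alphabet $\Gamma$. A $0$-stack is $(\gamma,x)$ with $\gamma\in\Gamma$, $x=(x_n,\dots,x_1)$ a vector of $n$ positive integers (position). For $k\in\{1,\dots,n\}$ a $k$-stack is a finite list $[s_1,\dots,s_m]$ ($m\ge0$) of nonempty $(k-1)$-stacks such that for some $x_n,\dots,x_{k+1}$, every position in $s_i$ has the form $(x_n,\dots,x_{k+1},i,y_{k-1},\dots,y_1)$. The top is at the right; $s^k:s^{k-1}$ appends at the top (right-associative); for $s^r=t^r:t^{r-1}:\dots:t^k$, $\mathrm{top}^k(s^r)=t^k$. Equality of stacks includes positions. For $k<n$, $\mathsf p_{+1}(s^k)$ adds $1$ to the $(n-k)$-th coordinate of all positions. Operations of order $k\ge1$: $\mathsf{pop}^k(s^r:\dots:s^k:s^{k-1})=s^r:\dots:s^k$, defined only if the topmost $k$-stack has at least two $(k-1)$-stacks; $\mathsf{push}^k_\gamma(s^r:\dots:s^0)=s^r:\dots:s^{k+1}:(s^k:\dots:s^0):\mathsf p_{+1}(s^{k-1}:\dots:s^1:(\gamma,x))$ where $s^0=(\gamma',x)$. An $n$-DPDA has transitions determined by state and topmost stack symbol, each either $\mathrm{read}(\vec q)$ ($\vec q:A\to Q$ injective; leads to $(\vec q(a),s)$ for $a\in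 A$, this step reads $a$) or $(q,op)$ with $op$ a stack operation of order $\le n$ (leads to $(q,op(s))$ if defined; reads nothing). Configurations are (state, nonempty $n$-stack). A run is a finite (or, for infinite runs, infinite) sequence $R=c_0,c_1,\dots$ with each $c_i$ a successor of $c_{i-1}$; $R(i)=c_i$, $|R|$ the length, $R[i,j]=c_i,\dots,c_j$. The word read is the concatenation of letters read by the steps. History: for a run $R$ and a $0$-stack $s^0$ of $R(|R|)$, $\mathrm{hist}(R,s^0)$ is a $0$-stack of $R(0)$: if $|R|=0$ it is $s^0$; if $R=S\circ T$, $|T|=1$, and the last step is a read or a $\mathsf{pop}$, or a $\mathsf{push}^r_\gamma$ with $s^0$ not in the topmost $(r-1)$-stack of $R(|R|)$, it is $\mathrm{hist}(S,s^0)$; if the last step is $\mathsf{push}^r_\gamma$ and $s^0$ is in the topmost $(r-1)$-stack of $R(|R|)$, it is $\mathrm{hist}(S,t^0)$ with $t^0$ equal to $s^0$ with the $(n-r+1)$-th position coordinate decreased by $1$. For a $k$-stack $s^k$ of $R(|R|)$, $k\ge1$, $\mathrm{hist}(R,s^k)$ is the $k$-stack of $R(0)$ containing $\mathrm{hist}(R,s^0)$ for all $0$-stacks $s^0$ of $s^k$. For $k\in\{0,\dots,n\}$, $R$ is $k$-upper if $\mathrm{hist}(R,\mathrm{top}^k(R(|R|)))=\mathrm{top}^k(R(0))$. Milestone: a configuration $c$ is a milestone if there exist an infinite run $R$ from $c$ reading only stars and an infinite set $I\subseteq\mathbb N$ with $0\in I$ such that $R[i,j]$ is $0$-upper for all $i,j\in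 I$ with $i\le j$. *)

From mathcomp Require Import all_boot.
Set Implicit Arguments.
Unset Strict Implicit.
Unset Printing Implicit Defensive.

(*   stk G k.+1 = seq (stk G k)  (top = last element of the list)          *)
(* Positions (x_n,...,x_1) are determined by the location inside the       *)
(* n-stack (x_k = 1-based index of the enclosing (k-1)-stack inside its    *)
(* k-stack), so they are represented as addresses: [:: x_n; ...; x_1].     *)

Fixpoint stk (G : Type) (m : nat) : Type :=
  match m with 0 => G | m'.+1 => seq (stk G m') end.

Definition lastopt (T : Type) (s : seq T) : option T :=
  match rev s with [::] => None | x :: _ => Some x end.

Definition dropl (T : Type) (s : seq T) : seq T := take (size s).-1 s.

Fixpoint ne (G : Type) (m : nat) : stk G m -> bool :=
  match m return stk G m -> bool with
  | 0 => fun _ => true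
  | m'.+1 => fun l => (0 < size (l : seq (stk G m'))) && all (@ne G m') l
  end.

Fixpoint topsym (G : Type) (m : nat) : stk G m -> option G :=
  match m return stk G m -> option G with
  | 0 => fun g => Some g
  | m'.+1 => fun l => obind (@topsym G m') (lastopt l)
  end.

Fixpoint toppos (G : Type) (m : nat) : stk G m -> seq nat :=
  match m return stk G m -> seq nat with
  | 0 => fun _ => [::]
  | m'.+1 => fun l => size l :: (match lastopt l with
                                 | Some t => @toppos G m' t
                                 | None => nseq m' 0 end)
  end.

Fixpoint settop (G : Type) (g : G) (m : nat) : stk G m -> stk G m :=
  match m return stk G m -> stk G m with
  | 0 => fun _ => g
  | m'.+1 => fun l => match lastopt l with
                      | Some t => rcons (dropl l) (@settop G g m' t)
                      | None => l end
  end.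

Inductive stack_op (G : Type) := Pop of nat | Push of nat & G.

Definition op_order (G : Type) (o : stack_op G) : nat :=
  match o with Pop k => k | Push k _ => k end.

Fixpoint app_op (G : Type) (o : stack_op G) (m : nat) : stk G m -> option (stk G m) :=
  match m return stk G m -> option (stk G m) with
  | 0 => fun _ => None
  | m'.+1 => fun l =>
      if op_order o == m'.+1 then
        match o with
        | Pop _ => if 2 <= size l then Some (dropl l) else None
        | Push _ g => match lastopt l with
                      | Some t => Some (rcons l (@settop G g m' t))
                      | None => None end
        end
      else if op_order o < m'.+1 then
        match lastopt l with
        | Some t => omap (fun t' => rcons (dropl l) t') (@app_op G o m' t)
        | None => None
        end
      else None
  end.

Inductive trans (A Q G : Type) :=
  | Read of (A -> Q)
  | Do of Q & stack_op G.

Record dpda (n : nat) (A Q G : finType) := Dpda {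
  delta : Q -> G -> trans A Q G;
  delta_read_inj : forall q g f, delta q g = Read G f -> injective f;
  delta_op_order : forall q g q' o, delta q g = Do A q' o ->
                     1 <= op_order o <= n
}.

Section Runs.
Variables (n : nat) (A Q G : finType) (M : dpda n A Q G).

Definition config : Type := (Q * stk G n)%type.

Definition is_config (c : config) : bool := ne c.2.

(* labelled successor relation; the label is the letter read (None = eps) *)
Definition lstep (c : config) (lab : option A) (c' : config) : Prop :=
  match topsym c.2 with
  | None => False
  | Some g =>
      match delta M c.1 g with
      | Read f => exists a, lab = Some a /\ c' = (f a, c.2)
      | Do q o => lab = None /\ c'.1 = q /\ app_op o c.2 = Some c'.2
      end
  end.

Definition star_step (star : A) (c c' : config) : Prop :=
  lstep c None c' \/ lstep c (Some star) c'.

(* one step of history: a position of c' (successor of c) to a position of c *)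
Definition hist_step (c c' : config) (p : seq nat) : seq nat :=
  match topsym c.2 with
  | None => p
  | Some g =>
      match delta M c.1 g with
      | Do _ (Push r _) =>
          if take (n - r + 1) p == take (n - r + 1) (toppos c'.2)
          then set_nth 0 p (n - r) (nth 0 p (n - r)).-1
          else p
      | _ => p
      end
  end.

(* hist(R[i, i+len], p): position in R i *)
Fixpoint hist (R : nat -> config) (i len : nat) (p : seq nat) : seq nat :=
  match len with
  | 0 => p
  | len'.+1 => hist_step (R i) (R i.+1) (hist R i.+1 len' p)
  end.

(* R[i,j] is 0-upper: hist(R[i,j], top^0(R j)) = top^0(R i)
   (both are 0-stacks of R i, so equality amounts to equality of positions) *)
Definition upper0 (R : nat -> config) (i j : nat) : Prop :=
  hist R i (j - i) (toppos (R j).2) = toppos (R i).2.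

Definition milestone (star : A) (c : config) : Prop :=
  exists R : nat -> config,
    R 0 = c /\
    (forall i, is_config (R i)) /\
    (forall i, star_step star (R i) (R i.+1)) /\
    exists I : nat -> Prop,
      I 0 /\ (forall m, exists i, m <= i /\ I i) /\
      (forall i j, I i -> I j -> i <= j -> upper0 R i j).

End Runs.

From mathcomp Require Import all_boot zify.
Set Implicit Arguments.
Unset Strict Implicit.
Unset Printing Implicit Defensive.

(* The address of the topmost 0-stack dominates every other address for
   the relation [below d] "equal on the first d coordinates, and <= at
   coordinate d" ([top_dominates]).  One step of history sends addresses of a
   successor back to addresses of its predecessor ([hist_step_pos]); it is the
   identity or [unpush], which decrements one coordinate of the addresses lying
   in a freshly pushed copy.  It is not monotone for the lexicographic order,
   but it preserves every relation [below d] ([hist_below]).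

   For s <= t, [traced s t] is the history at time s of the top at
   time t and [depth s t] the length of its common prefix with the top at
   time s; R[s,t] is 0-upper iff this depth is maximal.  Key fact
   ([not_upper_propagates]): if R[s,t] is not 0-upper and
   depth s t <= depth t u, then R[s,u] is not 0-upper.

   Let X and Y be two cofinal sets of indices, each with all its
   segments 0-upper.  A segment from s in X to t >= s in Y is 0-upper: else
   pick u >= t in X; since R[s,u] is 0-upper, depth t u < depth s t, and we
   conclude by induction on the depth with the roles of X and Y exchanged
   ([alternation_upper]).

   Main theorem.  By determinism of star steps, the run witnessing that R(0)
   is a milestone extends R[0,N], and the one for R(N) is its suffix from N;
   these give the two families of indices. *)

Lemma lastopt_rcons (T : Type) (s : seq T) x : lastopt (rcons s x) = Some x.
Proof. by rewrite /lastopt rev_rcons. Qed.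

Lemma dropl_rcons (T : Type) (s : seq T) x : dropl (rcons s x) = s.
Proof. by rewrite /dropl size_rcons -cats1 take_size_cat. Qed.

Lemma onth_rcons (T : Type) (s : seq T) x i :
  onth (rcons s x) i = if i < size s then onth s i else
                       if i == size s then Some x else None.
Proof.
rewrite -cats1 onth_cat; case: ltnP => // Hi.
by case: eqP => [->|Hne]; [rewrite subnn | rewrite onth_default //=; lia].
Qed.

Definition agree (d : nat) (p q : seq nat) : Prop :=
  forall i, i < d -> nth 0 p i = nth 0 q i.

(* [below d p q]: p and q agree before coordinate d and p is at most q there;
   a weakening, localized at coordinate d, of the lexicographic order. *)
Definition below (d : nat) (p q : seq nat) : Prop :=
  agree d p q /\ nth 0 p d <= nth 0 q d.

Lemma agree_le d d' p q : d <= d' -> agree d' p q -> agree d p q.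
Proof. by move=> Hd H i Hi; apply: H; exact: leq_trans Hi Hd. Qed.

Lemma agree_trans d p q r : agree d p q -> agree d q r -> agree d p r.
Proof. by move=> Hpq Hqr i Hi; rewrite Hpq ?Hqr. Qed.

Lemma agree_sym d p q : agree d p q -> agree d q p.
Proof. by move=> H i Hi; rewrite H. Qed.

Lemma take_agree k p q : k <= size p -> k <= size q ->
  (take k p = take k q) <-> agree k p q.
Proof.
move=> Hp Hq; split=> [E i Hi|Ha]; first by rewrite -(nth_take 0 Hi p) E nth_take.
apply: (@eq_from_nth _ 0); first by rewrite !size_takel.
by move=> i; rewrite size_takel // => Hi; rewrite !nth_take //; exact: Ha.
Qed.

(* Effect on addresses of undoing a push of order n - e in an n-stack whose
   top address (after the push) is T: addresses agreeing with T on the first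
   e + 1 coordinates lie in the pushed copy, and their coordinate e is
   decremented.  This is the formula of [hist_step] for push steps. *)
Definition unpush (e : nat) (T p : seq nat) : seq nat :=
  if take e.+1 p == take e.+1 T then set_nth 0 p e (nth 0 p e).-1 else p.

Lemma unpush_cons e y T x p :
  unpush e.+1 (y :: T) (x :: p) = if x == y then x :: unpush e T p else x :: p.
Proof. by rewrite /unpush /= eqseq_cons; case: eqP => //= ->; case: ifP. Qed.

Lemma unpush0 y T x p :
  unpush 0 (y :: T) (x :: p) = if x == y then x.-1 :: p else x :: p.
Proof. by rewrite /unpush /= !take0 eqseq_cons andbT. Qed.

Section Unpush.
Variables (n e : nat) (T : seq nat).
Hypotheses (He : e < n) (ST : size T = n).

Lemma unpush_size p : size p = n -> size (unpush e T p) = n.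
Proof.
by rewrite /unpush; case: ifP => // _ Sp; rewrite size_set_nth Sp; apply/maxn_idPr.
Qed.

Lemma unpush_nth p i : i != e -> nth 0 (unpush e T p) i = nth 0 p i.
Proof. by rewrite /unpush; case: ifP => // _ H; rewrite nth_set_nth /= (negbTE H). Qed.

Lemma unpush_matchP p : size p = n ->
  reflect (agree e.+1 p T) (take e.+1 p == take e.+1 T).
Proof. by move=> Sp; apply: (iffP eqP) => /take_agree; apply; lia. Qed.

(* The central monotonicity property: [unpush] preserves [below d].  When
   d = e and only q lies in the pushed copy, p is strictly smaller at e, so
   the decrement of q keeps the inequality. *)
Lemma unpush_below d p q : size p = n -> size q = n ->
  below d p q -> below d (unpush e T p) (unpush e T q).
Proof.
move=> Sp Sq [Ha Hle]; case: (ltngtP d e) => Hde.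
- split; last by rewrite !unpush_nth // neq_ltn Hde.
  by move=> i Hi; rewrite !unpush_nth ?Ha // neq_ltn (ltn_trans Hi Hde).
- have Hpq : agree e.+1 p q by apply: agree_le Ha.
  have Hmatch : (take e.+1 p == take e.+1 T) = (take e.+1 q == take e.+1 T).
    apply/(sameP (unpush_matchP Sp))/(iffP (unpush_matchP Sq)) => H.
      exact: agree_trans Hpq H.
    exact: agree_trans (agree_sym Hpq) H.
  rewrite /unpush Hmatch (Hpq e) //; case: ifP => _; split => //.
  + by move=> i Hi; rewrite !nth_set_nth /=; case: eqP => // _; apply: Ha.
  + by rewrite !nth_set_nth /= gtn_eqF.
- subst d; split; first by move=> i Hi; rewrite !unpush_nth ?Ha // neq_ltn Hi.
  rewrite /unpush; case: (unpush_matchP Sp) => Mp; case: (unpush_matchP Sq) => Mq;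
    rewrite ?nth_set_nth /= ?eqxx; try lia.
  suff : nth 0 p e != nth 0 q e by lia.
  apply: contra_not_neq Mp => E i; rewrite ltnS leq_eqVlt => /predU1P [->|Hi].
    by rewrite E (Mq e).
  by rewrite Ha // Mq // ltnW.
Qed.
End Unpush.

Section Addresses.
Variable G : Type.

(* [pos_in s p]: p = [:: x_m; ...; x_1] is the address of a 0-stack of the
   m-stack s (coordinates are 1-based indices from the bottom). *)
Fixpoint pos_in (m : nat) : stk G m -> seq nat -> Prop :=
  match m return stk G m -> seq nat -> Prop with
  | 0 => fun _ p => p = [::]
  | m'.+1 => fun l p => if p is x :: p'
      then 0 < x /\ exists2 t, onth l x.-1 = Some t & @pos_in m' t p'
      else False
  end.

Lemma pos_in_rcons m (s : seq (stk G m)) t x p :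
  pos_in (rcons s t : stk G m.+1) (x :: p) <->
  pos_in (s : stk G m.+1) (x :: p) \/ (x = (size s).+1 /\ pos_in t p).
Proof.
rewrite /= onth_rcons; case: (posnP x) => [->|x0]; first by split=> [[]|[[]|[]]].
case: (ltnP x.-1 (size s)) => Hx.
  split=> [|[//|[Ex _]]]; first by left.
  by move: Hx; rewrite Ex ltnn.
split=> [[_ [u]]|[[_ [u]]|[-> Hp]]].
- by case: eqP => // Ex [<-] Hp; right; rewrite -Ex prednK.
- by rewrite onth_default.
- by split=> //; exists t; rewrite ?eqxx.
Qed.

Lemma pos_in_head m (s : stk G m.+1) x p : pos_in s (x :: p) -> 0 < x <= size s.
Proof. by move=> /= [x0 [t Ht _]]; have := onthTE s x.-1; rewrite Ht /=; lia. Qed.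

Lemma pos_in_rcons_l m (s : seq (stk G m)) t p :
  pos_in (s : stk G m.+1) p -> pos_in (rcons s t : stk G m.+1) p.
Proof. by case: p => [//|x p] Hp; apply/pos_in_rcons; left. Qed.

Lemma pos_in_rcons_mono m (s : seq (stk G m)) t t' q :
  (forall p, pos_in t' p -> pos_in t p) ->
  pos_in (rcons s t' : stk G m.+1) q -> pos_in (rcons s t : stk G m.+1) q.
Proof.
case: q => [//|x q] Htt' /pos_in_rcons [H|[Ex H]]; apply/pos_in_rcons; first by left.
by right; split=> //; apply: Htt'.
Qed.

Lemma size_toppos m (s : stk G m) : size (toppos s) = m.
Proof.
elim: m s => [|m IH] s //=.
by case: (lastopt s) => [t|]; rewrite ?IH ?size_nseq.
Qed.

Lemma toppos_rcons m (s : seq (stk G m)) t :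
  toppos (rcons s t : stk G m.+1) = (size s).+1 :: toppos t.
Proof. by rewrite /= lastopt_rcons size_rcons. Qed.

Lemma pos_top m (s : stk G m) : ne s -> pos_in s (toppos s).
Proof.
elim: m s => [|m IH] //; case/lastP => [|s t] //.
rewrite toppos_rcons /= all_rcons => /andP[_ /andP[Ht _]].
by apply/pos_in_rcons; right; split=> //; apply: IH.
Qed.

Lemma top_dominates m (s : stk G m) p d :
  pos_in s p -> agree d p (toppos s) -> below d p (toppos s).
Proof.
move=> Hp Ha; split=> //.
elim: m s p d Hp Ha => [|m IH] s p d; first by move=> /= -> _; rewrite nth_nil.
case: p => [//|x p]; case/lastP: s => [|s t]; first by move=> /pos_in_head /=; lia.
rewrite toppos_rcons => Hp Ha; have := pos_in_head Hp; rewrite size_rcons.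
case: d Ha => [|d] Ha /andP[_ Hx] //=.
have Ex : x = (size s).+1 by apply: (Ha 0).
case/pos_in_rcons: Hp => [/pos_in_head|[_ Hp]]; first by rewrite Ex ltnn andbF.
by apply: IH => // i Hi; apply: (Ha i.+1).
Qed.

Lemma settop_pos g m (t : stk G m) p : pos_in (settop g t) p <-> pos_in t p.
Proof.
elim: m t p => [|m IH] //; case/lastP => [|s t] p //.
rewrite /= lastopt_rcons dropl_rcons.
by split; apply: pos_in_rcons_mono => q /IH.
Qed.

Lemma pop_pos r m (s s' : stk G m) p :
  app_op (Pop G r) s = Some s' -> pos_in s' p -> pos_in s p.
Proof.
elim: m s s' p => [|m IH] //; case/lastP => [|s t] s' p Happ.
all: rewrite /= in Happ; move: Happ.
  by repeat case: ifP.
rewrite lastopt_rcons dropl_rcons size_rcons; case: ifP => _.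
  by case: s => [|u s] // [<-]; apply: pos_in_rcons_l.
case: ifP => // _; case E: app_op => [t'|] // [<-].
by apply: pos_in_rcons_mono => q; apply: IH E.
Qed.

Lemma push_pos r g m (s s' : stk G m) p :
  app_op (Push r g) s = Some s' -> pos_in s' p ->
  pos_in s (unpush (m - r) (toppos s') p).
Proof.
elim: m s s' p => [|m IH] //; case/lastP => [|s t] s' p Happ.
all: rewrite /= in Happ; move: Happ.
  by repeat case: ifP.
rewrite lastopt_rcons dropl_rcons; case: ifP => [/eqP Er|_].
  have -> : m.+1 - r = 0 by rewrite -Er subnn.
  move=> [<-]; case: p => [//|x p].
  rewrite (toppos_rcons (rcons s t)) size_rcons unpush0.
  case/pos_in_rcons => [Hp|[-> Hp]].
    have /andP[_ Hx] := pos_in_head Hp; rewrite size_rcons in Hx.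
    by rewrite ifN // ltn_eqF.
  by rewrite size_rcons eqxx; apply/pos_in_rcons; right; split=> //; apply/(settop_pos g).
case: ifP => // Hr; case E: app_op => [t'|] // [<-].
case: p => [//|x p]; rewrite toppos_rcons subSn // unpush_cons.
case/pos_in_rcons => [Hp|[-> Hp]].
  rewrite ifN; first exact: pos_in_rcons_l.
  by have /andP[_ Hx] := pos_in_head Hp; rewrite ltn_eqF.
by rewrite eqxx; apply/pos_in_rcons; right; split=> //; apply: IH E Hp.
Qed.
End Addresses.

Section History.
Variables (n : nat) (A Q G : finType) (M : dpda n A Q G).

Lemma hist_step_cases (c c' : config n Q G) :
  (forall p, hist_step M c c' p = p) \/
  exists2 e, e < n & forall p, hist_step M c c' p = unpush e (toppos c'.2) p.
Proof.
rewrite /hist_step; case: (topsym c.2) => [g|]; last by left.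
case E: (delta M c.1 g) => [f|q [r|r g']]; try by left.
right; exists (n - r); last by move=> p; rewrite addn1.
by have /= := delta_op_order E; lia.
Qed.

Lemma hist_step_pos (c c' : config n Q G) lab p :
  lstep M c lab c' -> pos_in c'.2 p -> pos_in c.2 (hist_step M c c' p).
Proof.
rewrite /lstep /hist_step; case: (topsym c.2) => [g|] //.
case: (delta M c.1 g) => [f [a [_ ->]] //|q [r|r g'] [_ [_ Happ]]].
  exact: pop_pos Happ.
by rewrite addn1; apply: push_pos Happ.
Qed.

Lemma hist_step_size (c c' : config n Q G) p :
  size p = n -> size (hist_step M c c' p) = n.
Proof. by case: (hist_step_cases c c') => [->//|[e He ->]]; apply: unpush_size. Qed.

Lemma hist_step_below (c c' : config n Q G) d p q : size p = n -> size q = n ->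
  below d p q -> below d (hist_step M c c' p) (hist_step M c c' q).
Proof.
case: (hist_step_cases c c') => [H|[e He H]]; rewrite !H //.
by apply: unpush_below; rewrite ?size_toppos.
Qed.

Variable R : nat -> config n Q G.

Lemma hist_size i len p : size p = n -> size (hist M R i len p) = n.
Proof. by elim: len i => [|len IH] i //= Sp; apply/hist_step_size/IH. Qed.

Lemma hist_below i len d p q : size p = n -> size q = n ->
  below d p q -> below d (hist M R i len p) (hist M R i len q).
Proof.
elim: len i => [|len IH] i //= Sp Sq Hpq.
by apply: hist_step_below; rewrite ?hist_size //; apply: IH.
Qed.

Lemma hist_pos (Hstep : forall k, exists lab, lstep M (R k) lab (R k.+1)) i len p :
  pos_in (R (i + len)).2 p -> pos_in (R i).2 (hist M R i len p).
Proof.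
elim: len i => [|len IH] i /=; first by rewrite addn0.
move=> Hp; have [lab Hl] := Hstep i; apply: hist_step_pos Hl _.
by apply: IH; rewrite addSnnS.
Qed.

Lemma hist_cat i a b p : hist M R i (a + b) p = hist M R i a (hist M R (i + a) b p).
Proof. by elim: a i => [|a IH] i /=; rewrite ?addn0 // IH addSnnS. Qed.

Lemma hist_congr R' i i' len p :
  (forall k, k <= len -> R (i + k) = R' (i' + k)) ->
  hist M R i len p = hist M R' i' len p.
Proof.
elim: len i i' => [|len IH] i i' //= H.
rewrite (IH i.+1 i'.+1) => [|k Hk]; last by rewrite !addSnnS; apply: H.
have := H 0 isT; have := H 1 isT; rewrite !addn0 !addn1 => -> -> //.
Qed.
Lemma upper0_congr R' i j i' :
  i <= j -> (forall k, k <= j - i -> R (i + k) = R' (i' + k)) ->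
  upper0 M R i j <-> upper0 M R' i' (i' + (j - i)).
Proof.
move=> Hij H; rewrite /upper0 addKn -(hist_congr _ H).
have E0 : R i = R' i' by have := H 0 (leq0n _); rewrite !addn0.
have Ej : R j = R' (i' + (j - i)) by rewrite -H // subnKC.
by rewrite Ej E0.
Qed.
End History.

Fixpoint lcp (p q : seq nat) : nat :=
  match p, q with
  | x :: p', y :: q' => if x == y then (lcp p' q').+1 else 0
  | _, _ => 0
  end.

Lemma lcp_le p q : lcp p q <= size p.
Proof. by elim: p q => [|x p IH] [|y q] //=; case: ifP => //= _; apply: IH. Qed.

Lemma lcp_refl p : lcp p p = size p.
Proof. by elim: p => [|x p IH] //=; rewrite eqxx IH. Qed.

Lemma lcp_agree p q : agree (lcp p q) p q.
Proof.
elim: p q => [|x p IH] [|y q] //= i; case: ifP => //= /eqP ->.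
by case: i => //= i Hi; apply: IH.
Qed.

Lemma lcp_neq p q : size p = size q -> p <> q -> nth 0 p (lcp p q) != nth 0 q (lcp p q).
Proof.
elim: p q => [|x p IH] [|y q] //= [Hs] Hne.
case: ifP => [/eqP Exy|/negbT //]; subst y.
by apply: IH => // E; apply: Hne; rewrite E.
Qed.

Section Depth.
Variables (n : nat) (A Q G : finType) (M : dpda n A Q G) (R : nat -> config n Q G).
Hypothesis Hstep : forall k, exists lab, lstep M (R k) lab (R k.+1).
Hypothesis Hcfg : forall k, is_config (R k).

Definition traced (s t : nat) : seq nat := hist M R s (t - s) (toppos (R t).2).

(* How far R[s,t] is from being 0-upper: the common prefix of [traced s t]
   with the top address at time s; it equals n exactly on 0-upper segments. *)
Definition depth (s t : nat) : nat := lcp (traced s t) (toppos (R s).2).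

Lemma traced_pos s t : s <= t -> pos_in (R s).2 (traced s t).
Proof.
by move=> Hst; apply: hist_pos Hstep _ _ _ _; rewrite subnKC //; apply/pos_top/Hcfg.
Qed.

Lemma traced_size s t : size (traced s t) = n.
Proof. by apply: hist_size; apply: size_toppos. Qed.

Lemma traced_cat s t u : s <= t -> t <= u ->
  hist M R s (u - s) (toppos (R u).2) = hist M R s (t - s) (traced t u).
Proof. by move=> Hst Htu; rewrite -{1}(subnKC Htu) -addnBAC // hist_cat subnKC. Qed.

Lemma depth_le s t : depth s t <= n.
Proof. by rewrite -(traced_size s t); apply: lcp_le. Qed.

Lemma depth_upper s t : upper0 M R s t -> depth s t = n.
Proof. by rewrite /depth /upper0 /traced => ->; rewrite lcp_refl size_toppos. Qed.

(* Let d = depth s t < n.  The traced address y of R[s,t] agrees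
   with the top at time s before d and is strictly smaller at d; the traced
   address z of R[t,u] is [below d] the top at time t, so its history at
   time s is [below d] y, hence also differs from the top at time s. *)
Lemma not_upper_propagates s t u : s <= t -> t <= u ->
  ~ upper0 M R s t -> depth s t <= depth t u -> ~ upper0 M R s u.
Proof.
move=> Hst Htu Hne Hdep; rewrite /upper0 (traced_cat Hst Htu).
set d := depth s t.
have [_ Ly] : below d (traced s t) (toppos (R s).2).
  by apply: top_dominates; [apply: traced_pos | apply: lcp_agree].
have Ny : nth 0 (traced s t) d != nth 0 (toppos (R s).2) d.
  by apply: lcp_neq; rewrite ?traced_size ?size_toppos.
have Bz : below d (traced t u) (toppos (R t).2).
  apply: top_dominates; first exact: traced_pos.
  by apply: (agree_le Hdep); apply: lcp_agree.
have [_ Lz] := hist_below M R s (t - s) (traced_size t u) (size_toppos _) Bz.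
by move=> E; move: Lz; rewrite E -/(traced s t); lia.
Qed.

Definition upper_family (I : nat -> Prop) : Prop :=
  (forall m, exists i, m <= i /\ I i) /\
  (forall i j, I i -> I j -> i <= j -> upper0 M R i j).

(* Descent on the depth, exchanging the roles of the two families. *)
Lemma alternation_upper_depth c X Y s t :
  upper_family X -> upper_family Y -> X s -> Y t -> s <= t ->
  depth s t < c -> upper0 M R s t.
Proof.
elim: c X Y s t => [//|c IH] X Y s t [Xcof Xup] FY Xs Yt Hst Hc.
have [//|/eqP Hne] := eqVneq (traced s t) (toppos (R s).2).
have [u [Htu Xu]] := Xcof t.
have Hsu : upper0 M R s u by apply: Xup => //; apply: leq_trans Htu.
have Hlt : depth t u < depth s t.
  by rewrite ltnNge; apply/negP => /(not_upper_propagates Hst Htu Hne).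
have Htu' : upper0 M R t u by apply: (IH Y X) => //; lia.
by have := depth_le s t; rewrite (depth_upper Htu') in Hlt; lia.
Qed.

Lemma alternation_upper X Y s t :
  upper_family X -> upper_family Y -> X s -> Y t -> s <= t -> upper0 M R s t.
Proof.
move=> FX FY Xs Yt Hst; apply: (alternation_upper_depth (c := n.+1) FX FY) => //.
by have := depth_le s t.
Qed.
End Depth.

Section Determinism.
Variables (n : nat) (A Q G : finType) (M : dpda n A Q G) (star : A).

Lemma star_step_det (c c1 c2 : config n Q G) :
  star_step M star c c1 -> star_step M star c c2 -> c1 = c2.
Proof.
rewrite /star_step /lstep; case: (topsym c.2) => [g|]; last by case; case.
case: (delta M c.1 g) => [f|q o].
  by case=> [[a [//]]|[a [[<-] ->]]] [[b [//]]|[b [[<-] ->]]].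
case: c1 c2 => [q1 s1] [q2 s2] /=.
by case=> [[_ [-> E1]]|[//]] [[_ [-> E2]]|[//]]; move: E1; rewrite E2 => -[->].
Qed.

Lemma star_runs_agree (R1 R2 : nat -> config n Q G) N :
  R1 0 = R2 0 ->
  (forall i, i < N -> star_step M star (R1 i) (R1 i.+1)) ->
  (forall i, i < N -> star_step M star (R2 i) (R2 i.+1)) ->
  forall k, k <= N -> R1 k = R2 k.
Proof.
move=> E0 H1 H2; elim=> [//|k IH] Hk.
by apply: (star_step_det (H1 k Hk)); rewrite IH; [apply: H2 | apply: ltnW].
Qed.

Lemma star_step_lstep (c c' : config n Q G) :
  star_step M star c c' -> exists lab, lstep M c lab c'.
Proof. by case=> H; eexists; exact: H. Qed.

Lemma milestone_family (R : nat -> config n Q G) N :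
  (forall i, star_step M star (R i) (R i.+1)) -> milestone M star (R N) ->
  exists2 Y, Y N & upper_family M R Y.
Proof.
move=> Hrun [R' [R'0 [_ [R'run [J [J0 [Jcof Jup]]]]]]].
have ER : forall k, R (N + k) = R' k.
  move=> k; apply: (@star_runs_agree (fun k => R (N + k)) R' k) => //.
  - by rewrite addn0.
  - by move=> i _; rewrite addnS; apply: Hrun.
exists (fun k => N <= k /\ J (k - N)); first by rewrite subnn.
split=> [m|i j [Ni Ji] [Nj Jj] Hij].
  have [i [Hi Ji]] := Jcof m; exists (N + i); split; first lia.
  by rewrite addKn; split; first exact: leq_addr.
have Hshift k : k <= j - i -> R (i + k) = R' (i - N + k).
  by rewrite -ER addnA subnKC.
apply/(upper0_congr M Hij Hshift).
have -> : i - N + (j - i) = j - N by lia.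
by apply: Jup => //; lia.
Qed.
End Determinism.

Theorem mainTheorem13 (n : nat) (A Q G : finType) (M : dpda n A Q G)
    (star : A) (N : nat) (R : nat -> config n Q G) :
  1 <= n ->
  (forall i, i <= N -> is_config (R i)) ->
  (forall i, i < N -> star_step M star (R i) (R i.+1)) ->
  milestone M star (R 0) ->
  milestone M star (R N) ->
  upper0 M R 0 N.
Proof.
move=> _ _ Hsteps [R' [R'0 [R'cfg [R'run [I [I0 [Icof Iup]]]]]]] HmilN.
have ER : forall k, k <= N -> R' k = R k.
  by apply: star_runs_agree => // i _; apply: R'run.
have [Y YN FY] : exists2 Y, Y N & upper_family M R' Y.
  by apply: (milestone_family R'run); rewrite ER.
have Hstep k : exists lab, lstep M (R' k) lab (R' k.+1) by apply: star_step_lstep.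
have := alternation_upper Hstep R'cfg (conj Icof Iup) FY I0 YN (leq0n N).
move/(upper0_congr M (R' := R) (i' := 0) (leq0n N)); rewrite subn0 add0n.
by apply=> k Hk; rewrite ER.
Qed.
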